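(* Let $d\in\{1,2,3,7,11\}$, $K=\mathbb{Q}(\sqrt{-d})$, $\mathcal{O}_d$ its ring of integers, and $\Delta$ a positive integer not of the form $\beta\bar\beta$ with $\beta\in\mathcal{O}_d$. Fix $z\in\mathbb{C}$ and a $\hat\Gamma_d$-equivalence class $\mathcal{A}\subset\mathcal{H}(\mathcal{O}_d,-\Delta)$. Put $\mathcal{A}(z)=\{h\in\mathcal{A}: a_h<0<h(z,1)\}$, $\hat{\mathcal{A}}=\{h\in\mathcal{A}: h(0,1)<0<a_h\}$, and $$\mathcal{B}(z)=\{(f,\gamma)\in\hat{\mathcal{A}}\times\hat\Gamma_d(z):\ f(\gamma(\infty),1)<0<f(\gamma(z),1)\}.$$ Then $\Phi(f,\gamma)=\bar\gamma(f)=\gamma^tf\bar\gamma$ defines a map $\Phi:\mathcal{B}(z)\to\mathcal{A}(z)$, and $\Phi$ is surjective.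
   Context: $\mathcal{H}(\mathcal{O}_d,-\Delta)$ is the set of Hermitian matrices $h=\begin{psmallmatrix}a_h&b_h\\\bar b_h&c_h\end{psmallmatrix}$ with $a_h,c_h\in\mathbb{Z}$, $b_h\in\mathcal{O}_d$ and $\det h=a_hc_h-b_h\bar b_h=-\Delta$; the associated form is $h(z,w)=a_h|z|^2+b_hz\bar w+\bar b_h\bar zw+c_h|w|^2$. $\hat\Gamma_d=\mathbf{PGL}(2,\mathcal{O}_d)$ acts by $\sigma(h)=\bar\sigma^th\sigma$. For $\gamma=\begin{psmallmatrix}r&s\\t&v\end{psmallmatrix}$, $\gamma(z)=\frac{rz+s}{tz+v}$ and $\gamma(\infty)=r/t$. Continued fraction of $z$: let $\lfloor w\rceil$ be the element of $\mathcal{O}_d$ nearest to $w$ (ties broken by a fixed rule); $z_0=z$, $\alpha_n=\lfloor z_n\rceil$, $z_{n+1}=1/(z_n-\alpha_n)$, stopping if $z_n=\alpha_n$ (this happens iff $z\in K$). Set $p_{-2}=0,p_{-1}=1,p_n=\alpha_np_{n-1}+p_{n-2}$ and $q_{-2}=1,q_{-1}=0,q_n=\alpha_nq_{n-1}+q_{n-2}$. Then $\hat\Gamma_d(z)$ is the set of matrices $\gamma_n=\begin{psmallmatrix}q_{n-2}&-p_{n-2}\\-q_{n-1}&p_{n-1}\end{psmallmatrix}$ for $n\ge1$ (for which $p_{n-1},q_{n-1}$ are defined). *)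

From HB Require Import structures.
From mathcomp Require Import all_boot all_order all_algebra.
From mathcomp Require Import complex.
From mathcomp Require Import reals.
Set Implicit Arguments. Unset Strict Implicit. Unset Printing Implicit Defensive.
Import Order.TTheory GRing.Theory Num.Theory.
Local Open Scope ring_scope.

Section Defs.
Variable R : realType.
Local Notation C := (R[i]).

(* Generator of the ring of integers O_d of Q(sqrt(-d)) for squarefree d > 0:
   sqrt(-d) if d = 1,2 mod 4, and (1 + sqrt(-d))/2 if d = 3 mod 4. *)
Definition omega_d (d : nat) : C :=
  if (d %% 4 == 3)%N then (1 + sqrtC (- (d%:R))) / 2 else sqrtC (- (d%:R)).

Definition inOd (d : nat) (x : C) : Prop :=
  exists a b : int, x = a%:~R + b%:~R * omega_d d.

Definition inZ (x : C) : Prop := exists a : int, x = a%:~R.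

Definition unitOd (d : nat) (u : C) : Prop :=
  inOd d u /\ exists v, inOd d v /\ u * v = 1.

(* matrices representing elements of GL(2,O_d) (PGL = GL modulo scalar units) *)
Definition inGL2 (d : nat) (g : 'M[C]_2) : Prop :=
  (forall i j, inOd d (g i j)) /\ unitOd d (\det g).

Definition inH (d : nat) (Delta : nat) (h : 'M[C]_2) : Prop :=
  inZ (h 0 0) /\ inZ (h 1 1) /\ inOd d (h 0 1) /\ h 1 0 = (h 0 1)^* /\
  \det h = - (Delta%:R).

Definition conj_mx (g : 'M[C]_2) : 'M[C]_2 := map_mx (fun x => x^*) g.

Definition act (s h : 'M[C]_2) : 'M[C]_2 := (conj_mx s)^T *m h *m s.

Definition hform (h : 'M[C]_2) (z w : C) : C :=
  h 0 0 * (z * z^*) + h 0 1 * z * w^* + h 1 0 * z^* * w + h 1 1 * (w * w^*).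

Definition eqclass (d : nat) (h0 : 'M[C]_2) : 'M[C]_2 -> Prop :=
  fun h => exists s, inGL2 d s /\ h = act s h0.

(* nearest-element rounding functions to O_d (ties broken by any fixed rule) *)
Definition nearest_round (d : nat) (rnd : C -> C) : Prop :=
  forall w, inOd d (rnd w) /\ forall b, inOd d b -> `|w - rnd w| <= `|w - b|.

(* the sequence z_n of the continued fraction; None once the algorithm stopped *)
Fixpoint cf_z (rnd : C -> C) (z : C) (n : nat) : option C :=
  match n with
  | 0 => Some z
  | n.+1 => match cf_z rnd z n with
            | Some w => if w == rnd w then None else Some (1 / (w - rnd w))
            | None => None
            end
  end.

(* alpha_n = round(z_n) (only meaningful when z_n is defined) *)
Definition cf_alpha (rnd : C -> C) (z : C) (n : nat) : C :=
  match cf_z rnd z n with Some w => rnd w | None => 0 end.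

(* cf_pq k = (p_{k-2}, p_{k-1}, q_{k-2}, q_{k-1}) *)
Fixpoint cf_pq (rnd : C -> C) (z : C) (k : nat) : C * C * C * C :=
  match k with
  | 0 => (0, 1, 1, 0)
  | k.+1 => let: (a, b, c, e) := cf_pq rnd z k in
            (b, cf_alpha rnd z k * b + a, e, cf_alpha rnd z k * e + c)
  end.

Definition cf_gamma (rnd : C -> C) (z : C) (n : nat) : 'M[C]_2 :=
  let: (pm2, pm1, qm2, qm1) := cf_pq rnd z n in
  \matrix_(i < 2, j < 2)
    (if (i == 0) && (j == 0) then qm2
     else if (i == 0) then - pm2
     else if (j == 0) then - qm1 else pm1).

(* hat-Gamma_d(z): gamma_n for n >= 1 such that p_{n-1}, q_{n-1} are defined,
   i.e. alpha_{n-1} is defined, i.e. z_{n-1} is defined *)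
Definition in_Gamma_z (rnd : C -> C) (z : C) (g : 'M[C]_2) : Prop :=
  exists n, (0 < n)%N /\ cf_z rnd z n.-1 <> None /\ g = cf_gamma rnd z n.

(* sign-correct evaluation of f(gamma(x),1) for gamma = [[r,s],[t,v]]:
   f(gamma(x),1) = f(r x + s, t x + v) / |t x + v|^2 (projective convention,
   f(infinity,1) := f(1,0)) *)
Definition f_at_gamma (f g : 'M[C]_2) (x : C) : C :=
  hform f (g 0 0 * x + g 0 1) (g 1 0 * x + g 1 1).

(* f(gamma(infinity),1), gamma(infinity) = r/t *)
Definition f_at_gamma_inf (f g : 'M[C]_2) : C :=
  hform f (g 0 0) (g 1 0).

End Defs.

(* Transport h backwards along the continued fraction of z: F_n is the form with
   Phi(F_n, gamma_n) = h, so that F_0 = h, F_{n+1}(0,1) = a_{F_n} and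
   h(z,1) = |q_{n-1} z - p_{n-1}|^2 F_n(z_n,1).  For the five values of d every
   point of C lies within squared distance 15/16 of O_d, hence
   |q_{n-1} z - p_{n-1}|^2 <= (15/16)^n, whereas a form of determinant -Delta
   with integral a_F < 0 takes values at most Delta.  So a_{F_n} cannot stay
   negative; if the expansion stops at z_N = alpha_N, then q_N z = p_N and
   h(z,1) = a_{F_{N+1}} |q_{N-1} z - p_{N-1}|^2 shows a_{F_{N+1}} > 0 directly.
   At the first n with a_{F_n} > 0 we get F_n(0,1) = a_{F_{n-1}} < 0, strictly
   because Delta is not a norm. *)

From mathcomp Require Import all_boot all_order all_algebra.
From mathcomp Require Import complex.
From mathcomp Require Import reals.
From mathcomp Require Import ring lra zify.
Import Order.TTheory GRing.Theory Num.Theory.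
Local Open Scope ring_scope.
Set Implicit Arguments. Unset Strict Implicit. Unset Printing Implicit Defensive.

Lemma ord2P (i : 'I_2) : i = 0 \/ i = 1.
Proof. by case: i => [[|[|//]]] ?; [left | right]; apply/val_inj. Qed.

Lemma mx22P (T : Type) (M N : 'M[T]_2) :
  M 0 0 = N 0 0 -> M 0 1 = N 0 1 -> M 1 0 = N 1 0 -> M 1 1 = N 1 1 -> M = N.
Proof.
move=> e00 e01 e10 e11; apply/matrixP => i j.
by case: (ord2P i) => ->; case: (ord2P j) => ->.
Qed.

Lemma mulmx22E (T : pzSemiRingType) (A B : 'M[T]_2) i j :
  (A *m B) i j = A i 0 * B 0 j + A i 1 * B 1 j.
Proof.
rewrite mxE big_ord_recl big_ord1.
by have -> : lift (0 : 'I_2) (0 : 'I_1) = 1 by apply/val_inj.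
Qed.

Lemma det_mx22 (T : comNzRingType) (M : 'M[T]_2) :
  \det M = M 0 0 * M 1 1 - M 0 1 * M 1 0.
Proof.
rewrite (expand_det_row _ 0) big_ord_recl big_ord1 /cofactor !det_mx11 !mxE /=.
have -> : lift (0 : 'I_2) (0 : 'I_1) = 1 by apply/val_inj.
have -> : lift (1 : 'I_2) (0 : 'I_1) = 0 by apply/val_inj.
by rewrite expr0 expr1 mul1r mulN1r mulrN.
Qed.

Section RingOfIntegers.
Variables (R : realType) (d : nat).
Hypothesis d_gt0 : (0 < d)%N.
Local Notation C := R[i].
Local Notation w := (omega_d R d).
Local Notation inOd := (@inOd R d).

Lemma sqrtC_Nnat (n : nat) : (0 < n)%N ->
  exists2 b : R, sqrtC (- n%:R) = Complex 0 b :> C & b ^+ 2 = n%:R.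
Proof.
move=> n_gt0; have := sqrtCK (- n%:R : C).
case: (sqrtC _) => a b; rewrite expr2 -(rmorph_nat (real_complex R)) /=.
case=> re im; have {}re : a * a - b * b = - n%:R := re.
have n_pos : (0 : R) < n%:R by rewrite ltr0n.
have ab0 : a * b = 0 by lra.
have a0 : a = 0.
  have : a * a * (a * a + n%:R) == 0.
    have -> : a * a + n%:R = b * b by lra.
    by rewrite mulrACA ab0 mul0r.
  have aa_n : a * a + n%:R != 0 by rewrite gt_eqF //; nra.
  by rewrite mulf_eq0 (negbTE aa_n) orbF mulf_eq0 orbb => /eqP.
exists b; first by rewrite a0.
by rewrite expr2; move: re; rewrite a0 mul0r sub0r => /oppr_inj.
Qed.

Lemma omega_dE : exists2 b : R, b ^+ 2 = d%:R &
  w = if (d %% 4 == 3)%N then Complex 2^-1 (b / 2) else Complex 0 b.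
Proof.
have [b sqrtE b2] := sqrtC_Nnat d_gt0.
exists b; rewrite // /omega_d sqrtE; case: ifP => // _.
have -> : (2 : C)^-1 = Complex 2^-1 0.
  by rewrite -(rmorph_nat (real_complex R) 2) -fmorphV.
by rewrite /=; congr Complex; ring.
Qed.

Lemma omega_d_trace : w + w^* = (d %% 4 == 3)%N%:R.
Proof.
have [b _ ->] := omega_dE; case: ifP => _ /=.
  by simpc; apply/eqP; rewrite eq_complex /= eqxx andbT; apply/eqP; field.
by simpc; apply/eqP; rewrite eq_complex /= eqxx.
Qed.

Lemma omega_d_norm : w * w^* = (if (d %% 4 == 3)%N then (d %/ 4).+1 else d)%N%:R.
Proof.
have [b b2 ->] := omega_dE; case: ifP => [/eqP d3|_] /=.
  simpc; rewrite -(rmorph_nat (real_complex R)); congr Complex; last by ring.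
  have dE : d%:R = (d %/ 4)%:R * 4 + 3 :> R by rewrite {1}(divn_eq d 4) d3 natrD natrM.
  rewrite (_ : b / 2 * (b / 2) = b ^+ 2 / 4); last by field.
  by rewrite b2 dE -natr1; field.
by simpc; rewrite -(rmorph_nat (real_complex R)) -b2; congr Complex; ring.
Qed.

Lemma conj_omega_d_neq : w^* != w.
Proof.
have [b b2 ->] := omega_dE; have b0 : b != 0.
  by apply: contra_eq_neq b2 => ->; rewrite expr0n eq_sym pnatr_eq0 -lt0n.
by case: ifP => _;
  rewrite eq_complex negb_and /= eqNr ?mulf_eq0 ?invr_eq0 ?pnatr_eq0 (negbTE b0) orbT.
Qed.

Let omega_d_quadratic : exists t m : int,
  w^* = t%:~R - w /\ w ^+ 2 = t%:~R * w - m%:~R.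
Proof.
exists (d %% 4 == 3)%N, (if (d %% 4 == 3)%N then (d %/ 4).+1 else d)%N.
by rewrite -!pmulrn -omega_d_trace -omega_d_norm; split; ring.
Qed.

Lemma inOd_int (k : int) : inOd k%:~R.
Proof. by exists k, 0; rewrite mul0r addr0. Qed.

Lemma inOd_nat (n : nat) : inOd n%:R.
Proof. by rewrite pmulrn; apply: inOd_int. Qed.

Lemma inOd0 : inOd 0. Proof. exact: (inOd_nat 0). Qed.
Lemma inOd1 : inOd 1. Proof. exact: (inOd_nat 1). Qed.

Lemma inOdD x y : inOd x -> inOd y -> inOd (x + y).
Proof. by move=> [a [b ->]] [c [e ->]]; exists (a + c), (b + e); rewrite !intrD; ring. Qed.

Lemma inOdN x : inOd x -> inOd (- x).
Proof. by move=> [a [b ->]]; exists (- a), (- b); rewrite !intrN; ring. Qed.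

Lemma inOdB x y : inOd x -> inOd y -> inOd (x - y).
Proof. by move=> Ox Oy; apply/inOdD/inOdN. Qed.

Lemma inOdM x y : inOd x -> inOd y -> inOd (x * y).
Proof.
have [t [m [_ sqr_w]]] := omega_d_quadratic.
move=> [a [b ->]] [c [e ->]]; exists (a * c - b * e * m), (a * e + b * c + b * e * t).
have -> : (a%:~R + b%:~R * w) * (c%:~R + e%:~R * w) = a%:~R * c%:~R
    + (a%:~R * e%:~R + b%:~R * c%:~R) * w + b%:~R * e%:~R * w ^+ 2 :> C by ring.
by rewrite sqr_w !(intrD, intrM, intrN); ring.
Qed.

Lemma inOd_sign n : inOd ((-1) ^+ n).
Proof. by rewrite -signr_odd; case: odd; [apply/inOdN | ]; apply: inOd1. Qed.

Lemma inOd_conj x : inOd x -> inOd x^*.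
Proof.
have [t [m [conj_w _]]] := omega_d_quadratic.
move=> [a [b ->]]; exists (a + b * t), (- b).
by rewrite rmorphD rmorphM !rmorph_int /= conj_w !(intrD, intrM, intrN); ring.
Qed.

Lemma inOd_real (x : C) : inOd x -> x^* = x -> inZ x.
Proof.
move=> [a [b ->]]; rewrite rmorphD rmorphM !rmorph_int /= => /addrI /eqP.
rewrite -subr_eq0 -mulrBr mulf_eq0 subr_eq0 (negbTE (conj_omega_d_neq)) orbF intr_eq0.
by move=> /eqP ->; exists a; rewrite mul0r addr0.
Qed.

Lemma inOd_norm (x : C) : inOd x -> inZ (x * x^*).
Proof.
move=> Ox; apply: inOd_real; first exact/inOdM/inOd_conj.
by rewrite rmorphM /= conjCK mulrC.
Qed.

Lemma unitOd_norm (u : C) : unitOd d u -> u * u^* = 1.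
Proof.
move=> [Ou [v [Ov uv1]]].
have [[k kE] [l lE]] := (inOd_norm Ou, inOd_norm Ov).
have /eqP : (k * l)%:~R = 1%:~R :> C.
  by rewrite intrM -kE -lE mulrACA -rmorphM /= uv1 rmorph1 mulr1.
have : 0 <= l by rewrite -(ler0z C) -lE mul_conjC_ge0.
rewrite eqr_int kE; case: l {lE} => // n _; rewrite intUnitRing.mulzn_eq1.
by case/andP => /eqP ->.
Qed.

End RingOfIntegers.

Ltac push_conj :=
  rewrite ?(rmorphD, rmorphB, rmorphM, rmorphN, rmorph1, rmorph0, rmorphXn) /= ?conjCK.

Lemma realC_lt0 (R : realType) (x : R[i]) : x^* = x -> x != 0 -> ~~ (0 < x) -> x < 0.
Proof.
move=> /eqP; rewrite -CrealE => xreal x_neq0.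
by rewrite real_ltNge ?real0 // negbK lt_neqAle x_neq0.
Qed.

Section HermitianAction.
Variable R : realType.
Local Notation C := R[i].
Implicit Types (s t g h f : 'M[C]_2) (x y : C).

Lemma conj_mxE g i j : conj_mx g i j = (g i j)^*.
Proof. by rewrite mxE. Qed.

Lemma conj_mxM s t : conj_mx (s *m t) = conj_mx s *m conj_mx t.
Proof. exact: map_mxM. Qed.

Lemma conj_mx1 : conj_mx 1 = 1 :> 'M[C]_2.
Proof. exact: map_mx1. Qed.

Lemma det_conj_mx g : \det (conj_mx g) = (\det g)^*.
Proof. exact: det_map_mx. Qed.

Lemma conj_mxK g : conj_mx (conj_mx g) = g.
Proof. by apply/matrixP => i j; rewrite !mxE conjCK. Qed.

Lemma conj_trmx g : conj_mx g^T = (conj_mx g)^T.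
Proof. by apply/matrixP => i j; rewrite !mxE. Qed.

Lemma act_mulmx s t h : act (t *m s) h = act s (act t h).
Proof. by rewrite /act conj_mxM trmx_mul !mulmxA. Qed.

Lemma act1 h : act 1 h = h.
Proof. by rewrite /act conj_mx1 trmx1 mul1mx mulmx1. Qed.

Lemma actE s h i j : act s h i j = (s 0 i)^* * (h 0 0 * s 0 j + h 0 1 * s 1 j)
                                 + (s 1 i)^* * (h 1 0 * s 0 j + h 1 1 * s 1 j).
Proof. by rewrite /act !mulmx22E !mxE; ring. Qed.

Lemma hform_act s h x y : hform (act s h) x y =
  hform h ((s 0 0)^* * x + (s 0 1)^* * y) ((s 1 0)^* * x + (s 1 1)^* * y).
Proof. by rewrite /hform !actE; push_conj; ring. Qed.

Lemma act00 s h : act s h 0 0 = hform h (s 0 0)^* (s 1 0)^*.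
Proof. by rewrite actE /hform; push_conj; ring. Qed.

Lemma act11 s h : act s h 1 1 = hform h (s 0 1)^* (s 1 1)^*.
Proof. by rewrite actE /hform; push_conj; ring. Qed.

Lemma hform01 h : hform h 0 1 = h 1 1.
Proof. by rewrite /hform; push_conj; ring. Qed.

Lemma det_act s h : \det (act s h) = (\det s)^* * \det h * \det s.
Proof. by rewrite /act !det_mulmx det_tr det_conj_mx. Qed.

Lemma hform_act_conj g f x : hform (act (conj_mx g) f) x 1 = f_at_gamma f g x.
Proof. by rewrite hform_act /f_at_gamma !conj_mxE !conjCK !mulr1. Qed.

Lemma act_conj00 g f : act (conj_mx g) f 0 0 = f_at_gamma_inf f g.
Proof. by rewrite act00 /f_at_gamma_inf !conj_mxE !conjCK. Qed.

Lemma hermitian_act s h : (conj_mx h)^T = h -> (conj_mx (act s h))^T = act s h.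
Proof.
move=> hermh; rewrite /act !conj_mxM !trmx_mul.
by rewrite conj_trmx conj_mxK trmxK hermh mulmxA.
Qed.

Lemma hermitianE h : (conj_mx h)^T = h ->
  [/\ (h 0 0)^* = h 0 0, (h 1 1)^* = h 1 1 & h 1 0 = (h 0 1)^*].
Proof.
move=> hermh; have hE i j : (h j i)^* = h i j by rewrite -{2}hermh !mxE.
by rewrite !hE.
Qed.

Lemma hformZ h c x y : hform h (c * x) (c * y) = c * c^* * hform h x y.
Proof. by rewrite /hform; push_conj; ring. Qed.

Lemma hform_x0 h x : hform h x 0 = h 0 0 * (x * x^*).
Proof. by rewrite /hform; push_conj; ring. Qed.

End HermitianAction.

Section HermitianOd.
Variables (R : realType) (d : nat).
Hypothesis d_gt0 : (0 < d)%N.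
Local Notation C := R[i].
Local Notation inOd := (@inOd R d).
Implicit Types (s t g h f : 'M[C]_2).

Definition mxOd g := forall i j, inOd (g i j).

Lemma det_mxOd g : mxOd g -> inOd (\det g).
Proof. by move=> Og; rewrite det_mx22; apply: inOdB; apply: inOdM. Qed.

Lemma inGL2_mulmx s t : inGL2 d s -> inGL2 d t -> inGL2 d (s *m t).
Proof.
move=> [Os [Ods [u [Ou su1]]]] [Ot [Odt [v [Ov tv1]]]].
split=> [i j|]; first by rewrite mulmx22E; apply: inOdD; apply: inOdM.
rewrite det_mulmx; split; first exact: inOdM.
by exists (u * v); split; [apply: inOdM | rewrite mulrACA su1 tv1 mulr1].
Qed.

Lemma inGL2_conj s : inGL2 d s -> inGL2 d (conj_mx s).
Proof.
move=> [Os [Ods [u [Ou su1]]]].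
split=> [i j|]; first by rewrite conj_mxE; apply: inOd_conj.
rewrite det_conj_mx; split; first exact: inOd_conj.
by exists u^*; split; [apply: inOd_conj | rewrite -rmorphM su1 rmorph1].
Qed.

Lemma inGL2_mulmx1 s t : mxOd s -> mxOd t -> s *m t = 1 -> inGL2 d s.
Proof.
move=> Os Ot st1; split=> //; split; first exact: det_mxOd.
by exists (\det t); split; [apply: det_mxOd | rewrite -det_mulmx st1 det1].
Qed.

(* H(O_d, -Delta), except that the diagonal entries are only required to be
   real elements of O_d; by [inOd_real] they are then rational integers. *)
Definition hermOd (Delta : nat) h :=
  [/\ mxOd h, (conj_mx h)^T = h & \det h = - Delta%:R].

Variable Delta : nat.

Lemma inH_hermOd h : inH d Delta h -> hermOd Delta h.
Proof.
move=> [[a aE] [[c cE] [Ob [h10 deth]]]]; split=> //.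
  move=> i j; case: (ord2P i) => ->; case: (ord2P j) => ->; rewrite ?aE ?cE ?h10 //.
  - exact: inOd_int.
  - exact: inOd_conj.
  - exact: inOd_int.
by apply: mx22P; rewrite !mxE ?aE ?cE ?h10 ?conjCK // rmorph_int.
Qed.

Lemma hermOd_act s h : inGL2 d s -> hermOd Delta h -> hermOd Delta (act s h).
Proof.
move=> [Os unit_det] [Oh hermh deth]; split.
- by move=> i j; rewrite actE; do !(apply: inOdD || apply: inOdM || apply: inOd_conj).
- exact: hermitian_act.
- by rewrite det_act deth mulrC mulrA (unitOd_norm d_gt0 unit_det) mul1r.
Qed.

Lemma eqclass_act h0 f s : eqclass d h0 f -> inGL2 d s -> eqclass d h0 (act s f).
Proof.
move=> [t [GLt ->]] GLs; exists (t *m s).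
by rewrite act_mulmx; split; first exact: inGL2_mulmx.
Qed.

Lemma eqclass_hermOd h0 f : inH d Delta h0 -> eqclass d h0 f -> hermOd Delta f.
Proof. by move=> /inH_hermOd herm0 [s [GLs ->]]; apply: hermOd_act. Qed.

Hypothesis not_norm : forall beta, inOd beta -> beta * beta^* <> Delta%:R.

Lemma hermOd_diag_neq0 h i : hermOd Delta h -> h i i != 0.
Proof.
move=> [Oh /hermitianE[_ _ h10]]; rewrite det_mx22 h10 => deth.
have normE : h 0 0 * h 1 1 = 0 -> h 0 1 * (h 0 1)^* = Delta%:R.
  by move=> h00h11; apply: oppr_inj; rewrite -deth h00h11 sub0r.
apply: contra_notN (not_norm (Oh 0 1)) => /eqP hii0; apply: normE.
by case: (ord2P i) hii0 => -> ->; rewrite ?mul0r ?mulr0.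
Qed.

Lemma hermOd_diag_lt0 h i : hermOd Delta h -> ~~ (0 < h i i) -> h i i < 0.
Proof.
move=> hermh; apply: realC_lt0; last exact: hermOd_diag_neq0.
by case: hermh => _ /hermitianE[h00 h11 _] _; case: (ord2P i) => ->.
Qed.

Lemma hermOd_hform_le h x : hermOd Delta h -> h 0 0 < 0 -> hform h x 1 <= Delta%:R.
Proof.
move=> [Oh /hermitianE[h00 h11 h10] deth] a_lt0.
have [k kE] := inOd_real d_gt0 (Oh 0 0) h00.
have a_leN1 : 1 <= - h 0 0.
  by move: a_lt0; rewrite kE ltrz0 -intrN ler1z; lia.
have DeltaE : Delta%:R = h 0 1 * (h 0 1)^* - h 0 0 * h 1 1.
  by apply: oppr_inj; rewrite -deth det_mx22 h10 opprB.
have hform_real : hform h x 1 \is Num.real.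
  by rewrite CrealE /hform h10; push_conj; rewrite h00 h11; apply/eqP; ring.
have key : - h 0 0 * hform h x 1 =
           Delta%:R - (h 0 0 * x + (h 0 1)^*) * (h 0 0 * x + (h 0 1)^*)^*.
  by rewrite /hform h10 DeltaE; push_conj; rewrite h00; ring.
have [hform_le0|hform_ge0] := real_leP hform_real (real0 _).
  by apply: le_trans hform_le0 _; apply: ler0n.
apply: le_trans (ler_peMl (ltW hform_ge0) a_leN1) _.
by rewrite key gerBl mul_conjC_ge0.
Qed.

End HermitianOd.

Section ContinuedFraction.
Variables (R : realType) (rnd : R[i] -> R[i]) (z : R[i]).
Local Notation C := R[i].
Local Notation alpha := (cf_alpha rnd z).

(* [cf_p2 n], [cf_p1 n], [cf_q2 n], [cf_q1 n] are p_{n-2}, p_{n-1}, q_{n-2}, q_{n-1}. *)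
Definition cf_p2 n := (cf_pq rnd z n).1.1.1.
Definition cf_p1 n := (cf_pq rnd z n).1.1.2.
Definition cf_q2 n := (cf_pq rnd z n).1.2.
Definition cf_q1 n := (cf_pq rnd z n).2.

Definition cf_err1 n := cf_q1 n * z - cf_p1 n.
Definition cf_err2 n := cf_q2 n * z - cf_p2 n.

Lemma cf_pq0 : [/\ cf_p2 0 = 0, cf_p1 0 = 1, cf_q2 0 = 1 & cf_q1 0 = 0].
Proof. by []. Qed.

Lemma cf_pqS n : [/\ cf_p2 n.+1 = cf_p1 n, cf_p1 n.+1 = alpha n * cf_p1 n + cf_p2 n,
                     cf_q2 n.+1 = cf_q1 n & cf_q1 n.+1 = alpha n * cf_q1 n + cf_q2 n].
Proof. by rewrite /cf_p2 /cf_p1 /cf_q2 /cf_q1 /=; case: (cf_pq rnd z n) => [[[]]]. Qed.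

Lemma cf_gammaE n : [/\ cf_gamma rnd z n 0 0 = cf_q2 n, cf_gamma rnd z n 0 1 = - cf_p2 n,
                        cf_gamma rnd z n 1 0 = - cf_q1 n & cf_gamma rnd z n 1 1 = cf_p1 n].
Proof.
rewrite /cf_gamma /cf_p2 /cf_p1 /cf_q2 /cf_q1.
by case: (cf_pq rnd z n) => [[[a b] c] e]; rewrite !mxE.
Qed.

Lemma cf_pq_det n : cf_p1 n * cf_q2 n - cf_p2 n * cf_q1 n = (-1) ^+ n.
Proof.
elim: n => [|n IHn]; first by have [-> -> -> ->] := cf_pq0; rewrite expr0; ring.
by have [-> -> -> ->] := cf_pqS n; rewrite exprS -IHn; ring.
Qed.

Lemma cf_errS n :
  cf_err2 n.+1 = cf_err1 n /\ cf_err1 n.+1 = alpha n * cf_err1 n + cf_err2 n.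
Proof. by rewrite /cf_err1 /cf_err2; have [-> -> -> ->] := cf_pqS n; split; ring. Qed.

Lemma cf_z_pred n : cf_z rnd z n.+1 <> None -> cf_z rnd z n <> None.
Proof. by rewrite /=; case: (cf_z rnd z n). Qed.

Lemma cf_alpha_Some n w : cf_z rnd z n = Some w -> alpha n = rnd w.
Proof. by rewrite /cf_alpha => ->. Qed.

Lemma cf_err2_Some n w : cf_z rnd z n = Some w -> cf_err2 n = - w * cf_err1 n.
Proof.
elim: n w => [w [<-]|n IHn w].
  by rewrite /cf_err1 /cf_err2; have [-> -> -> ->] := cf_pq0; ring.
rewrite /=; case zn: (cf_z rnd z n) => [v|] //; case: eqP => // v_neq [<-].
have [-> ->] := cf_errS n; rewrite (cf_alpha_Some zn) (IHn _ zn).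
have v_sub_neq0 : v - rnd v != 0 by rewrite subr_eq0; apply/eqP.
by field.
Qed.

Lemma cf_err1S_Some n w : cf_z rnd z n = Some w -> cf_err1 n.+1 = - (w - rnd w) * cf_err1 n.
Proof.
move=> zn; have [_ ->] := cf_errS n.
by rewrite (cf_alpha_Some zn) (cf_err2_Some zn); ring.
Qed.

Lemma f_at_cf_gamma f n :
  f_at_gamma f (cf_gamma rnd z n) z = hform f (cf_err2 n) (- cf_err1 n).
Proof.
rewrite /f_at_gamma; have [-> -> -> ->] := cf_gammaE n.
by congr hform; rewrite /cf_err1 /cf_err2; ring.
Qed.

Definition cf_gamma_inv n : 'M[C]_2 := \matrix_(i < 2, j < 2) ((-1) ^+ n *
  if (i == 0) && (j == 0) then cf_p1 n else if i == 0 then cf_p2 n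
  else if j == 0 then cf_q1 n else cf_q2 n).

Lemma mul_cf_gamma_inv n : cf_gamma_inv n *m cf_gamma rnd z n = 1.
Proof.
have [g00 g01 g10 g11] := cf_gammaE n.
have detE : (-1) ^+ n * (cf_p1 n * cf_q2 n - cf_p2 n * cf_q1 n) = 1.
  by rewrite cf_pq_det -exprMn mulrNN mulr1 expr1n.
apply: mx22P; rewrite !mulmx22E ?g00 ?g01 ?g10 ?g11 !mxE /=;
  by [rewrite -[RHS]detE; ring | ring].
Qed.

Variable d : nat.
Hypotheses (d_gt0 : (0 < d)%N) (rnd_nearest : nearest_round d rnd).

Lemma cf_pq_Od n :
  [/\ inOd d (cf_p2 n), inOd d (cf_p1 n), inOd d (cf_q2 n) & inOd d (cf_q1 n)].
Proof.
have alpha_Od k : inOd d (alpha k).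
  rewrite /cf_alpha; case: (cf_z rnd z k) => [w|]; last exact: inOd0.
  exact: (rnd_nearest w).1.
elim: n => [|n [Op2 Op1 Oq2 Oq1]].
  have [-> -> -> ->] := cf_pq0.
  by split; [exact: inOd0 | exact: inOd1 | exact: inOd1 | exact: inOd0].
by have [-> -> -> ->] := cf_pqS n; split=> //; apply: inOdD => //; apply: inOdM.
Qed.

Let cf_gamma_Od n : mxOd d (cf_gamma rnd z n).
Proof.
have [Op2 Op1 Oq2 Oq1] := cf_pq_Od n; have [g00 g01 g10 g11] := cf_gammaE n.
by move=> i j; case: (ord2P i) => ->; case: (ord2P j) => ->;
  rewrite ?g00 ?g01 ?g10 ?g11 //; apply: inOdN.
Qed.

Let cf_gamma_inv_Od n : mxOd d (cf_gamma_inv n).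
Proof.
have [Op2 Op1 Oq2 Oq1] := cf_pq_Od n.
move=> i j; rewrite mxE; apply: (inOdM d_gt0); first exact: inOd_sign.
by case: (ord2P i) => ->; case: (ord2P j) => ->.
Qed.

Lemma cf_gamma_GL n : inGL2 d (cf_gamma rnd z n).
Proof. exact: inGL2_mulmx1 (mulmx1C (mul_cf_gamma_inv n)). Qed.

Lemma cf_gamma_inv_GL n : inGL2 d (cf_gamma_inv n).
Proof. exact: inGL2_mulmx1 (mul_cf_gamma_inv n). Qed.

End ContinuedFraction.

Lemma mem_euclidean_gt0 d : d \in [:: 1; 2; 3; 7; 11]%N -> (0 < d)%N.
Proof. by rewrite !inE => /or4P[| | |/orP[]] /eqP ->. Qed.

Section Covering.
Variable R : realType.
Local Notation C := R[i].

Lemma floor_round_sqr (t : R) : exists k : int, (t - k%:~R) ^+ 2 <= 4^-1.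
Proof.
exists (Num.floor (t + 2^-1)).
have := floor_le (t + 2^-1); have := floorD1_gt (t + 2^-1); rewrite intrD.
move: (Num.floor _)%:~R => k; nra.
Qed.

(* Round the imaginary part first: the squared error is at most 1/4 + (11/4)(1/4). *)
Lemma lattice_covering (wr wi x y : R) : wi != 0 -> wi ^+ 2 <= 11 / 4 ->
  exists m n : int, (x - (m%:~R + n%:~R * wr)) ^+ 2 + (y - n%:~R * wi) ^+ 2 <= 15 / 16.
Proof.
move=> wi_neq0 wi_le; have [n yn] := floor_round_sqr (y / wi).
have [m xm] := floor_round_sqr (x - n%:~R * wr); exists m, n.
have -> : (y - n%:~R * wi) ^+ 2 = wi ^+ 2 * (y / wi - n%:~R) ^+ 2 by field.
have : wi ^+ 2 * (y / wi - n%:~R) ^+ 2 <= 11 / 4 * 4^-1 by apply: ler_pM; rewrite ?sqr_ge0.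
have -> : x - (m%:~R + n%:~R * wr) = x - n%:~R * wr - m%:~R by ring.
lra.
Qed.

Variable d : nat.
Hypothesis d_mem : d \in [:: 1; 2; 3; 7; 11]%N.

Let omega_d_coord : exists wr wi : R,
  [/\ omega_d R d = Complex wr wi, wi != 0 & wi ^+ 2 <= 11 / 4].
Proof.
have d_gt0 := mem_euclidean_gt0 d_mem; have [b b2 ->] := omega_dE R d_gt0.
have b_neq0 : b != 0.
  by apply: contra_eq_neq b2 => ->; rewrite expr0n eq_sym pnatr_eq0 -lt0n.
have : if (d %% 4 == 3)%N then (d <= 11)%N else (d <= 2)%N.
  by move: d_mem; rewrite !inE => /or4P[| | |/orP[]] /eqP ->.
case: ifP => _; rewrite -(ler_nat R) => d_le.
  exists 2^-1, (b / 2); split=> //; first by rewrite mulf_neq0 ?invr_eq0 ?pnatr_eq0.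
  by rewrite expr_div_n b2; lra.
by exists 0, b; split; rewrite // b2; lra.
Qed.

Lemma inOd_covering (w : C) : exists2 b, inOd d b & (w - b) * (w - b)^* <= 15%:R / 16%:R.
Proof.
have [wr [wi [omegaE wi_neq0 wi_le]]] := omega_d_coord.
case: w => x y; have [m [n mn]] := lattice_covering wr x y wi_neq0 wi_le.
exists (m%:~R + n%:~R * omega_d R d); first by exists m, n.
rewrite omegaE -!(rmorph_int (real_complex R)) -!(rmorph_nat (real_complex R)) -fmorph_div.
by simpc; apply/andP; split; [apply/eqP; ring | move: mn; rewrite !expr2; lra].
Qed.

End Covering.

Section Geometric.
Variable R : realType.

Lemma bernoulli_ineq (x : R) n : 0 <= x -> 1 + n%:R * x <= (1 + x) ^+ n.
Proof.
move=> x_ge0; elim: n => [|n IHn]; first by rewrite mul0r addr0 expr0.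
have n_ge0 : (0 : R) <= n%:R by apply: ler0n.
by rewrite exprS -natr1; nra.
Qed.

Lemma expr_geometric_lt (q D v : R) : 0 < q < 1 -> 0 < v -> exists n, q ^+ n * D < v.
Proof.
move=> /andP[q_gt0 q_lt1] v_gt0; set x := q^-1 - 1.
have x_gt0 : 0 < x by rewrite subr_gt0 invf_gt1.
exists (Num.truncn (D / (v * x))).+1; set n := _.+1.
have D_lt : D < v * (1 + n%:R * x).
  have : D / (v * x) < n%:R by apply: truncnS_gt.
  by rewrite ltr_pdivrMr ?mulr_gt0 //; nra.
have qn_gt0 : 0 < q ^+ n by apply: exprn_gt0.
have qn_bound : q ^+ n * (1 + n%:R * x) <= 1.
  have : 1 + n%:R * x <= (q ^+ n)^-1.
    by rewrite -exprVn (_ : q^-1 = 1 + x) ?bernoulli_ineq ?ltW // /x addrC subrK.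
  by rewrite -(ler_pM2l qn_gt0) mulfV ?lt0r_neq0.
rewrite -(ltr_pM2l qn_gt0) in D_lt; apply: lt_le_trans D_lt _.
by rewrite mulrCA ler_piMr ?(ltW v_gt0).
Qed.

Lemma rho_expr_lt (D : nat) (v : R[i]) : 0 < v -> exists n, (15%:R / 16%:R) ^+ n * D%:R < v.
Proof.
case: v => vr vi; rewrite ltcE /= => /andP[/eqP -> vr_gt0].
have [|n ltv] := @expr_geometric_lt (15 / 16) D%:R _ _ vr_gt0.
  by apply/andP; split; lra.
exists n; rewrite -!(rmorph_nat (real_complex R)) -fmorph_div -rmorphXn -rmorphM.
by rewrite ltcE /= eqxx.
Qed.

End Geometric.

Section ErrorDecay.
Variables (R : realType) (rnd : R[i] -> R[i]) (z : R[i]) (d : nat).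
Hypothesis d_mem : d \in [:: 1; 2; 3; 7; 11]%N.
Hypothesis rnd_nearest : nearest_round d rnd.
Local Notation rho := (15%:R / 16%:R : R[i]).
Local Notation err1 := (cf_err1 rnd z).

Lemma nearest_round_sqr w : (w - rnd w) * (w - rnd w)^* <= rho.
Proof.
have [b Ob /(le_trans _)-> //] := inOd_covering d_mem w.
rewrite -!normCK lerXn2r ?nnegrE ?normr_ge0 //.
exact: (rnd_nearest w).2.
Qed.

Lemma cf_err1_decay n : (exists N w, cf_z rnd z N = Some w /\ w = rnd w) \/
  (cf_z rnd z n <> None /\ err1 n * (err1 n)^* <= rho ^+ n).
Proof.
elim: n => [|n [stops|[zn_def IHn]]]; [right | by left |].
  rewrite /cf_err1; have [_ -> _ ->] := cf_pq0 rnd z.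
  by rewrite mul0r sub0r rmorphN rmorph1 mulrNN mulr1 expr0.
case zn: (cf_z rnd z n) zn_def => [w|] // _.
have [w_eq|w_neq] := eqVneq w (rnd w); first by left; exists n, w.
right; split; first by rewrite /= zn (negbTE w_neq).
rewrite (cf_err1S_Some zn) exprS.
have -> : - (w - rnd w) * err1 n * (- (w - rnd w) * err1 n)^* =
  (w - rnd w) * (w - rnd w)^* * (err1 n * (err1 n)^*).
  by push_conj; ring.
by apply: ler_pM; rewrite ?mul_conjC_ge0 ?nearest_round_sqr.
Qed.

End ErrorDecay.

Section Surjectivity.
Variables (R : realType) (rnd : R[i] -> R[i]) (z : R[i]).
Variables (d Delta : nat) (h0 h : 'M[R[i]]_2).
Hypothesis d_mem : d \in [:: 1; 2; 3; 7; 11]%N.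
Hypothesis rnd_nearest : nearest_round d rnd.
Hypothesis not_norm : forall beta : R[i], inOd d beta -> beta * beta^* <> Delta%:R.
Hypothesis h0_inH : inH d Delta h0.
Hypotheses (h_class : eqclass d h0 h) (h00_lt0 : h 0 0 < 0) (hz_gt0 : 0 < hform h z 1).

Let d_gt0 : (0 < d)%N := mem_euclidean_gt0 d_mem.

Local Notation gamma := (cf_gamma rnd z).
Local Notation err1 := (cf_err1 rnd z).
Local Notation err2 := (cf_err2 rnd z).

Definition cf_form n := act (conj_mx (cf_gamma_inv rnd z n)) h.

Lemma cf_form_class n : eqclass d h0 (cf_form n).
Proof. exact/eqclass_act/inGL2_conj/cf_gamma_inv_GL. Qed.

Lemma cf_form_hermOd n : hermOd d Delta (cf_form n).
Proof. exact/eqclass_hermOd/cf_form_class. Qed.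

Lemma act_cf_form n : act (conj_mx (gamma n)) (cf_form n) = h.
Proof. by rewrite -act_mulmx -conj_mxM mul_cf_gamma_inv conj_mx1 act1. Qed.

Lemma cf_form0 : cf_form 0 = h.
Proof.
rewrite /cf_form; suff -> : cf_gamma_inv rnd z 0 = 1 by rewrite conj_mx1 act1.
by apply: mx22P; rewrite !mxE /= expr0 mul1r.
Qed.

Lemma cf_form11S n : cf_form n.+1 1 1 = cf_form n 0 0.
Proof.
rewrite act11 act00 !conj_mxE !conjCK !mxE /=.
have [-> _ -> _] := cf_pqS rnd z n.
by rewrite exprS /hform; push_conj; ring.
Qed.

Lemma hform_cf_form n : hform h z 1 = hform (cf_form n) (err2 n) (- err1 n).
Proof. by rewrite -{1}(act_cf_form n) hform_act_conj f_at_cf_gamma. Qed.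

Lemma hform_cf_form_Some n w : cf_z rnd z n = Some w ->
  hform h z 1 = err1 n * (err1 n)^* * hform (cf_form n) w 1.
Proof.
move=> zn; rewrite (hform_cf_form n) (cf_err2_Some zn) mulNr -mulrN mulrC.
by rewrite -[X in hform _ _ X]mulr1 hformZ rmorphN mulrNN.
Qed.

Definition cf_form_pos n := (cf_z rnd z n.-1 != None) && (0 < cf_form n 0 0).

Lemma exists_cf_form_pos : exists n, cf_form_pos n.
Proof.
have [n0 rho_lt] := rho_expr_lt Delta hz_gt0.
case: (cf_err1_decay z d_mem rnd_nearest n0) => [[N [w [zN w_eq]]] | [zn0_def err_le]].
  exists N.+1; rewrite /cf_form_pos /= zN /=.
  have err1_eq0 : err1 N.+1 = 0 by rewrite (cf_err1S_Some zN) -w_eq subrr oppr0 mul0r.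
  move: (hform_cf_form N.+1); rewrite err1_eq0 oppr0 hform_x0 => hzE.
  apply: contraT => /(hermOd_diag_lt0 not_norm (cf_form_hermOd _)) F00_lt0.
  suff : hform h z 1 <= 0 by move/(lt_le_trans hz_gt0); rewrite ltxx.
  by rewrite hzE mulr_le0_ge0 ?mul_conjC_ge0 ?(ltW F00_lt0).
case zn0: (cf_z rnd z n0) zn0_def => [w|] // _.
exists n0; rewrite /cf_form_pos; apply/andP; split.
  by case: n0 {rho_lt err_le} zn0 => [|n] // zn; apply/eqP/cf_z_pred; rewrite zn.
apply: contraT => /(hermOd_diag_lt0 not_norm (cf_form_hermOd _)) F00_lt0.
have Fw_le := hermOd_hform_le d_gt0 w (cf_form_hermOd n0) F00_lt0.
suff : hform h z 1 <= (15%:R / 16%:R) ^+ n0 * Delta%:R.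
  by move/(lt_le_trans rho_lt); rewrite ltxx.
rewrite (hform_cf_form_Some zn0); apply: le_trans (ler_wpM2l (mul_conjC_ge0 _) Fw_le) _.
by rewrite ler_wpM2r ?ler0n.
Qed.

Lemma cf_preimage : exists n, [/\ (0 < n)%N, cf_z rnd z n.-1 <> None,
                                  0 < cf_form n 0 0 & cf_form n 1 1 < 0].
Proof.
have [n /andP[zn_def F00_gt0] n_min] := ex_minnP exists_cf_form_pos.
case: n zn_def F00_gt0 n_min => [|n zn_def F00_gt0 n_min].
  by rewrite cf_form0 => _ /(lt_trans h00_lt0); rewrite ltxx.
exists n.+1; split=> //; first exact/eqP.
rewrite cf_form11S; apply: (hermOd_diag_lt0 not_norm (cf_form_hermOd _)).
apply/negP => F00n_gt0; suff : (n < n)%N by rewrite ltnn.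
apply: n_min; rewrite /cf_form_pos F00n_gt0 andbT.
by case: n {F00_gt0 F00n_gt0} zn_def => // n zn; apply/eqP/cf_z_pred/eqP.
Qed.

End Surjectivity.

Theorem proposition3p2 (R : realType) (d : nat) (Delta : nat)
  (rnd : R[i] -> R[i]) (z : R[i]) (A : 'M[R[i]]_2 -> Prop) :
  d \in [:: 1; 2; 3; 7; 11]%N ->
  (0 < Delta)%N ->
  (forall beta : R[i], inOd d beta -> beta * beta^* <> Delta%:R) ->
  nearest_round d rnd ->
  (exists h0, inH d Delta h0 /\ A = eqclass d h0) ->
  let Az := fun h => A h /\ h 0 0 < 0 /\ 0 < hform h z 1 in
  let Ahat := fun f => A f /\ hform f 0 1 < 0 /\ 0 < f 0 0 in
  let Bz := fun f g => Ahat f /\ in_Gamma_z rnd z g /\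
                       f_at_gamma_inf f g < 0 /\ 0 < f_at_gamma f g z in
  let Phi := fun f g => act (conj_mx g) f in
  (forall f g, Bz f g -> Az (Phi f g)) /\
  (forall h, Az h -> exists f g, Bz f g /\ Phi f g = h).
Proof.
move=> d_mem _ not_norm rnd_nearest [h0 [h0_inH ->]] Az Ahat Bz Phi.
have d_gt0 := mem_euclidean_gt0 d_mem.
split.
  move=> f g [[f_class _] [[n [_ [_ ->]]] [inf_lt0 z_gt0]]].
  split; first exact/eqclass_act/inGL2_conj/cf_gamma_GL.
  by rewrite /Phi act_conj00 hform_act_conj.
move=> h [h_class [h00_lt0 hz_gt0]].
have [n [n_gt0 zn_def F00_gt0 F11_lt0]] :=
  cf_preimage d_mem rnd_nearest not_norm h0_inH h_class h00_lt0 hz_gt0.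
exists (cf_form rnd z h n), (cf_gamma rnd z n); split; last exact: act_cf_form.
split; first by split; [apply: cf_form_class | rewrite hform01].
split; first by exists n.
by rewrite -act_conj00 -hform_act_conj act_cf_form.
Qed.
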